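(* Let $A=(a_{ij})$ be a nonnegative weighted adjacency matrix on vertices $v_1,\dots,v_n$ with all out-degrees $o(v_i)=\sum_j a_{ij}>0$, let $P=D_o^{-1}A$ with $D_o=\operatorname{diag}(o(v_1),\dots,o(v_n))$, let $\nu(v_j)=\sum_{\ell=1}^n p_{\ell j}$, assume $\nu(v_j)>0$ for all $j$, set $D_\nu=\operatorname{diag}(\nu(v_1),\dots,\nu(v_n))$ and $Q=PD_\nu^{-1}P^\top$. Let $(x^{(k)},y^{(k)})$, $k=1,2,\dots$, be i.i.d. pairs where $x^{(k)}$ is uniformly distributed on $\{v_1,\dots,v_n\}$ and, given $x^{(k)}=v_i$, $y^{(k)}=v_j$ with probability $p_{ij}$. Let $\phi=(\phi_1,\dots,\phi_n)^\top$ with $\phi_i$ the indicator function of $v_i$, and for each $m$ let $\Phi_x=[\phi(x^{(1)}),\dots,\phi(x^{(m)})]$, $\Phi_y=[\phi(y^{(1)}),\dots,\phi(y^{(m)})]\in\mathbb{R}^{n\times m}$, $C_{xx}=\frac1m\Phi_x\Phi_x^\top$, $C_{yy}=\frac1m\Phi_y\Phi_y^\top$, $C_{xy}=C_{yx}^\top=\frac1m\Phi_x\Phi_y^\top$, and $\widehat K^{(m)}=C_{xx}^+C_{xy}$, $\widehat P^{(m)}=C_{xx}^+C_{yx}$, $\widehat F^{(m)}=C_{xx}^+C_{xy}C_{yy}^+C_{yx}$, where $^+$ denotes the Moore–Penrose pseudoinverse. Then, as $m\to\infty$ (almost surely), $\widehat K^{(m)}\to P$, $\widehat P^{(m)}\to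 P^\top$, and $\widehat F^{(m)}\to Q$.
   Context: $P$ is the transition matrix of the random walk on the graph; $\widehat K^{(m)}$, $\widehat P^{(m)}$, $\widehat F^{(m)}$ are the extended dynamic mode decomposition (EDMD) estimates of the Koopman, Perron–Frobenius and forward-backward operators from the data pairs, using the basis of vertex indicator functions (one-hot encodings). *)

From HB Require Import structures.
From mathcomp Require Import all_boot all_order all_algebra.
From mathcomp Require Import all_classical all_reals all_analysis.
Set Implicit Arguments. Unset Strict Implicit. Unset Printing Implicit Defensive.
Import Order.TTheory GRing.Theory Num.Theory numFieldNormedType.Exports.
Local Open Scope classical_set_scope.
Local Open Scope ring_scope.

(* B is a Moore–Penrose pseudoinverse of A: the four Penrose conditions
   (over the reals the conjugate transpose is the transpose). *)
Definition is_mpinv (R : realType) (p q : nat) (A : 'M[R]_(p, q))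
  (B : 'M[R]_(q, p)) : Prop :=
  [/\ A *m B *m A = A, B *m A *m B = B,
      (A *m B)^T = A *m B & (B *m A)^T = B *m A].

(* The Moore–Penrose pseudoinverse A^+ (exists and is unique for every
   real matrix; chosen via classical choice). *)
Definition mpinv (R : realType) (p q : nat) (A : 'M[R]_(p, q)) : 'M[R]_(q, p) :=
  xget 0 (fun B => is_mpinv A B).

Definition outdeg (R : realType) (n : nat) (A : 'M[R]_n) (i : 'I_n) : R :=
  \sum_(j < n) A i j.

Definition transP (R : realType) (n : nat) (A : 'M[R]_n) : 'M[R]_n :=
  invmx (diag_mx (\row_i outdeg A i)) *m A.

Definition nu (R : realType) (n : nat) (A : 'M[R]_n) (j : 'I_n) : R :=
  \sum_(l < n) transP A l j.

Definition fbQ (R : realType) (n : nat) (A : 'M[R]_n) : 'M[R]_n :=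
  transP A *m invmx (diag_mx (\row_j nu A j)) *m (transP A)^T.

Definition phi (R : realType) (n : nat) (v : 'I_n) : 'cV[R]_n := delta_mx v 0.

(* Phi = [phi(z^(1)), ..., phi(z^(m))] for the sample z^(1..m) (indexed 0..m-1) *)
Definition Phi (R : realType) (n m : nat) (z : nat -> 'I_n) : 'M[R]_(n, m) :=
  \matrix_(i < n, k < m) phi R (z k) i 0.

Definition Cov (R : realType) (n m : nat) (a b : nat -> 'I_n) : 'M[R]_n :=
  (m%:R)^-1 *: (Phi R m a *m (Phi R m b)^T).

Definition Khat (R : realType) (n m : nat) (x y : nat -> 'I_n) : 'M[R]_n :=
  mpinv (Cov R m x x) *m Cov R m x y.
Definition Phat (R : realType) (n m : nat) (x y : nat -> 'I_n) : 'M[R]_n :=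
  mpinv (Cov R m x x) *m Cov R m y x.
Definition Fhat (R : realType) (n m : nat) (x y : nat -> 'I_n) : 'M[R]_n :=
  mpinv (Cov R m x x) *m Cov R m x y *m mpinv (Cov R m y y) *m Cov R m y x.

Definition pair_event (T : Type) (n : nat) (X Y : nat -> T -> 'I_n)
  (k : nat) (ij : 'I_n * 'I_n) : set T :=
  [set t | X k t = ij.1 /\ Y k t = ij.2].

(* The pairs (X k, Y k), k in nat, are mutually independent (finite-valued
   random variables: product rule over every finite family of indices and
   every choice of values). *)
Definition indep_pairs (R : realType) (d : measure_display) (T : measurableType d)
  (Pr : probability T R) (n : nat) (X Y : nat -> T -> 'I_n) : Prop :=
  forall (s : seq nat) (f : nat -> 'I_n * 'I_n), uniq s ->
    Pr (\big[setI/setT]_(k <- s) pair_event X Y k (f k)) =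
    (\prod_(k <- s) Pr (pair_event X Y k (f k)))%E.

Definition walk_pair_law (R : realType) (d : measure_display) (T : measurableType d)
  (Pr : probability T R) (n : nat) (Pm : 'M[R]_n) (X Y : nat -> T -> 'I_n) : Prop :=
  forall k i j,
    Pr [set t | X k t = i] = (n%:R^-1)%:E /\
    Pr (pair_event X Y k (i, j)) = (Pr [set t | X k t = i] * (Pm i j)%:E)%E.

Definition sample_measurable (d : measure_display) (T : measurableType d)
  (n : nat) (X Y : nat -> T -> 'I_n) : Prop :=
  forall k i j, measurable [set t | X k t = i] /\ measurable [set t | Y k t = j].

Definition mx_cvg (R : realType) (n : nat) (M : nat -> 'M[R]_n) (L : 'M[R]_n) : Prop :=
  forall i j, (fun m : nat => M m i j) @ \oo --> (L i j : R).

(** With one-hot features every empirical covariance matrix is a table of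
empirical frequencies: [C_xy] counts the pairs [(x_k, y_k) = (v_i, v_j)] and
[C_xx] is the diagonal matrix of the counts of [x_k = v_i], whose
pseudoinverse is the diagonal of the inverse counts.  Hence all three
estimators are rational functions of the empirical frequencies of the pairs,
with denominators that are row and column sums of the pair frequencies.  The
pairs are i.i.d. with law [p_ij / n], so by the strong law of large numbers
(for finite-valued sequences it follows from the fourth-moment bound
[E (S_m)^4 <= 3 m^2] for a centred bounded sum, Markov's inequality and
Borel-Cantelli) these frequencies converge almost surely to [p_ij / n]; the
row sums tend to [1/n] and the column sums to [nu(v_j)/n], which are nonzero,
so the estimators converge to [P], [P^T] and [P D_nu^-1 P^T]. *)

From HB Require Import structures.
From mathcomp Require Import all_boot all_order all_algebra.
From mathcomp Require Import all_classical all_reals all_analysis.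
From mathcomp Require Import ring lra.
Import Order.TTheory GRing.Theory Num.Theory numFieldNormedType.Exports.
Local Open Scope classical_set_scope.
Local Open Scope ring_scope.

Lemma is_mpinv_uniq (R : realType) p q (A : 'M[R]_(p, q)) (B C : 'M[R]_(q, p)) :
  is_mpinv A B -> is_mpinv A C -> B = C.
Proof.
case=> ABA BAB ABsym BAsym [ACA CAC ACsym CAsym].
have BAC : B = B *m A *m C.
  have tBtA : B^T *m A^T = A *m B by rewrite -trmx_mul ABsym.
  have tA : A^T = A^T *m (A *m C) by rewrite -{1}ACA trmx_mul ACsym.
  transitivity (B *m (A *m B)); first by rewrite mulmxA BAB.
  by rewrite -tBtA tA (mulmxA B^T) tBtA !mulmxA BAB.
have CAC' : C = B *m A *m C.
  have tAtC : A^T *m C^T = C *m A by rewrite -trmx_mul CAsym.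
  have tA : A^T = B *m A *m A^T by rewrite -{1}ABA -mulmxA trmx_mul BAsym.
  transitivity (C *m A *m C); first by rewrite CAC.
  rewrite -CAsym trmx_mul tA -[B *m A *m A^T *m C^T]mulmxA tAtC.
  by rewrite -(mulmxA (B *m A)) CAC.
by rewrite BAC -CAC'.
Qed.

Lemma mpinv_diag_mx (R : realType) n (d : 'rV[R]_n) :
  mpinv (diag_mx d) = diag_mx (\row_i (d 0 i)^-1).
Proof.
have mulfVK (x : R) : x * x^-1 * x = x.
  by have [->|x0] := eqVneq x 0; [rewrite !mul0r | rewrite mulfV ?mul1r].
have mulVfK (x : R) : x^-1 * x * x^-1 = x^-1.
  by have [->|x0] := eqVneq x 0; [rewrite invr0 !mul0r | rewrite mulVf ?mul1r].
have dV : is_mpinv (diag_mx d) (diag_mx (\row_i (d 0 i)^-1)).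
  by split; rewrite ?mulmx_diag ?tr_diag_mx //; congr diag_mx; apply/rowP => j;
    rewrite !mxE.
exact: is_mpinv_uniq (xgetPex 0 (ex_intro _ _ dV)) dV.
Qed.

Lemma invmx_diag_mx (F : fieldType) n (d : 'rV[F]_n) : (forall i, d 0 i != 0) ->
  invmx (diag_mx d) = diag_mx (\row_i (d 0 i)^-1).
Proof.
move=> d_neq0.
have dV : diag_mx d *m diag_mx (\row_i (d 0 i)^-1) = 1%:M.
  by rewrite mulmx_diag; apply/matrixP => i j; rewrite !mxE mulfV.
have [d_unit _] := mulmx1_unit dV.
by rewrite -[RHS]mul1mx -(mulVmx d_unit) -mulmxA dV mulmx1.
Qed.

Definition freq {R : fieldType} {V : eqType} (z : nat -> V) v m : R :=
  m%:R^-1 * \sum_(k < m) (z k == v)%:R.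

Lemma sum_natr_eq (R : pzSemiRingType) (V : finType) (x : V) :
  \sum_v (x == v)%:R = 1 :> R.
Proof.
rewrite (bigD1 x) //= eqxx big1 ?addr0 // => v.
by rewrite eq_sym => /negbTE ->.
Qed.

Lemma freq_fst {R : fieldType} {U : eqType} {V : finType} (z : nat -> U * V) u m :
  freq (fst \o z) u m = \sum_v freq z (u, v) m :> R.
Proof.
rewrite /freq -mulr_sumr exchange_big; congr (_ * _); apply: eq_bigr => k _ /=.
case: (z k) => a b; under eq_bigr do rewrite xpair_eqE -mulnb natrM.
by rewrite -mulr_sumr sum_natr_eq mulr1.
Qed.

Lemma freq_snd {R : fieldType} {U : finType} {V : eqType} (z : nat -> U * V) v m :
  freq (snd \o z) v m = \sum_u freq z (u, v) m :> R.
Proof.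
rewrite /freq -mulr_sumr exchange_big; congr (_ * _); apply: eq_bigr => k _ /=.
case: (z k) => a b; under eq_bigr do rewrite xpair_eqE -mulnb natrM.
by rewrite -mulr_suml sum_natr_eq mul1r.
Qed.

Lemma cvg_sumr (R : realType) (I : Type) (r : seq I) (f : I -> nat -> R)
    (a : I -> R) :
  (forall i, f i m @[m --> \oo] --> a i) ->
  \sum_(i <- r) f i m @[m --> \oo] --> \sum_(i <- r) a i.
Proof. by move=> fa; apply: cvg_big => //; exact: add_continuous. Qed.

Section EmpiricalCovariances.
Variables (R : realType) (n m : nat).
Implicit Types a b : nat -> 'I_n.

Lemma Cov_entry a b i j : Cov R m a b i j = freq (fun k => (a k, b k)) (i, j) m.
Proof.
rewrite /Cov /freq !mxE; congr (_ * _); apply: eq_bigr => k _.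
by rewrite /Phi /phi !mxE !andbT xpair_eqE -mulnb natrM (eq_sym i) (eq_sym j).
Qed.

Lemma trmx_Cov a b : (Cov R m a b)^T = Cov R m b a.
Proof.
apply/matrixP => i j; rewrite mxE !Cov_entry /freq.
by under eq_bigr do rewrite !xpair_eqE andbC.
Qed.

Lemma Cov_diag a : Cov R m a a = diag_mx (\row_i freq a i m).
Proof.
apply/matrixP => i j; rewrite Cov_entry !mxE /freq.
have [<-|ij] := eqVneq i j; first by under eq_bigr do rewrite xpair_eqE andbb.
rewrite big1 ?mulr0 // => k _.
by rewrite xpair_eqE; case: eqP => //= ->; rewrite (negbTE ij).
Qed.

Lemma Khat_entry a b i j : Khat R m a b i j = (freq a i m)^-1 * Cov R m a b i j.
Proof. by rewrite /Khat Cov_diag mpinv_diag_mx mul_diag_mx !mxE. Qed.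

Lemma Phat_entry a b i j : Phat R m a b i j = (freq a i m)^-1 * Cov R m b a i j.
Proof. by rewrite /Phat Cov_diag mpinv_diag_mx mul_diag_mx !mxE. Qed.

Lemma Fhat_entry a b i j : Fhat R m a b i j =
  \sum_l (freq a i m)^-1 * Cov R m a b i l * (freq b l m)^-1 * Cov R m b a l j.
Proof.
rewrite /Fhat !Cov_diag !mpinv_diag_mx [LHS]mxE; apply: eq_bigr => l _.
by rewrite mul_mx_diag mxE mul_diag_mx !mxE.
Qed.

End EmpiricalCovariances.

Section EstimatorLimits.
Context {R : realType} {n : nat} {x y : nat -> 'I_n} {C : 'I_n -> 'I_n -> R}.
Hypothesis pair_freq_cvg :
  forall i j, freq (fun k => (x k, y k)) (i, j) m @[m --> \oo] --> C i j.

Lemma Cov_cvg i j : Cov R m x y i j @[m --> \oo] --> C i j.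
Proof. by under eq_cvg do rewrite Cov_entry; exact: pair_freq_cvg. Qed.

Lemma Cov_swap_cvg i j : Cov R m y x i j @[m --> \oo] --> C j i.
Proof. by under eq_cvg do rewrite -trmx_Cov mxE; exact: Cov_cvg. Qed.

Lemma freq_fst_cvg i : freq x i m @[m --> \oo] --> \sum_j C i j.
Proof.
under eq_cvg do rewrite (freq_fst (fun k => (x k, y k))).
by apply: cvg_sumr => j; exact: pair_freq_cvg.
Qed.

Lemma freq_snd_cvg j : freq y j m @[m --> \oo] --> \sum_i C i j.
Proof.
under eq_cvg do rewrite (freq_snd (fun k => (x k, y k))).
by apply: cvg_sumr => i; exact: pair_freq_cvg.
Qed.

Hypothesis rowsum_neq0 : forall i, \sum_j C i j != 0.

Lemma Khat_cvg i j :
  Khat R m x y i j @[m --> \oo] --> (\sum_l C i l)^-1 * C i j.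
Proof.
under eq_cvg do rewrite Khat_entry.
by apply: cvgM; [apply: cvgV; [|exact: freq_fst_cvg] | exact: Cov_cvg].
Qed.

Lemma Phat_cvg i j :
  Phat R m x y i j @[m --> \oo] --> (\sum_l C i l)^-1 * C j i.
Proof.
under eq_cvg do rewrite Phat_entry.
by apply: cvgM; [apply: cvgV; [|exact: freq_fst_cvg] | exact: Cov_swap_cvg].
Qed.

Hypothesis colsum_neq0 : forall j, \sum_i C i j != 0.

Lemma Fhat_cvg i j : Fhat R m x y i j @[m --> \oo] -->
  \sum_l (\sum_k C i k)^-1 * C i l * (\sum_k C k l)^-1 * C j l.
Proof.
under eq_cvg do rewrite Fhat_entry.
apply: cvg_sumr => l; apply: cvgM; last exact: Cov_swap_cvg.
apply: cvgM; last by apply: cvgV; [|exact: freq_snd_cvg].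
by apply: cvgM; [apply: cvgV; [|exact: freq_fst_cvg] | exact: Cov_cvg].
Qed.

End EstimatorLimits.

(** * Fourth moment of a centred sum of i.i.d. variables *)

Lemma lone_index m (a b c d : 'I_m) :
  ~~ [|| (a == b) && (c == d), (a == c) && (b == d) | (a == d) && (b == c)] ->
  exists k : 'I_m, ((k == a) + (k == b) + (k == c) + (k == d))%N = 1%N.
Proof.
pose mult k := ((k == a) + (k == b) + (k == c) + (k == d))%N.
move=> unpaired.
suff : [|| mult a == 1, mult b == 1, mult c == 1 | mult d == 1]%N.
  by case/or4P => /eqP; eexists; eassumption.
move: unpaired; rewrite /mult !eqxx.
by repeat match goal with |- context [?x == ?y] =>
  case: (eqVneq x y) => [?|?]; [subst|] end.
Qed.

Lemma expr4_sum (R : comPzRingType) m (F : 'I_m -> R) : (\sum_k F k) ^+ 4 =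
  \sum_a \sum_b \sum_c \sum_d F a * F b * F c * F d.
Proof.
rewrite !exprS expr0 mulr1 mulr_suml; apply: eq_bigr => a _.
rewrite mulr_suml mulr_sumr; apply: eq_bigr => b _.
rewrite mulr_suml !mulr_sumr; apply: eq_bigr => c _.
by rewrite !mulr_sumr; apply: eq_bigr => d _; rewrite !mulrA.
Qed.

Lemma sum_pairings (R : pzSemiRingType) m :
  \sum_(a < m) \sum_(b < m) \sum_(c < m) \sum_(d < m)
   (((a == b) && (c == d))%:R + ((a == c) && (b == d))%:R +
    ((a == d) && (b == c))%:R) = 3 * m%:R ^+ 2 :> R.
Proof.
have sum_andr (u : bool) (x : 'I_m) : \sum_(d < m) (u && (x == d))%:R = u%:R :> R.
  by case: u; rewrite /= ?sum_natr_eq ?big1.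
transitivity (\sum_(a < m) \sum_(b < m) \sum_(c < m)
   ((a == b)%:R + (a == c)%:R + (b == c)%:R : R)).
  apply: eq_bigr => a _; apply: eq_bigr => b _; apply: eq_bigr => c _.
  rewrite !big_split /= !sum_andr.
  by under eq_bigr do rewrite andbC; rewrite sum_andr.
transitivity (\sum_(a < m) \sum_(b < m) ((a == b)%:R *+ m + 2%:R : R)).
  apply: eq_bigr => a _; apply: eq_bigr => b _.
  by rewrite !big_split /= sumr_const card_ord !sum_natr_eq -addrA.
transitivity (\sum_(a < m) (3%:R *+ m : R)).
  apply: eq_bigr => a _; rewrite big_split /= sumrMnl sum_natr_eq.
  by rewrite sumr_const card_ord -mulrnDl -[3%:R]natr1 addrC.
by rewrite sumr_const card_ord -mulrnA -(mulr_natr (3 : R) (m * m)) natrM expr2.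
Qed.

Section FourthMoment.
Context {R : realType} {V : finType} {q z : V -> R}.
Hypotheses (q_ge0 : forall v, 0 <= q v) (q_sum1 : \sum_v q v = 1).
Hypotheses (z_le1 : forall v, `|z v| <= 1) (z_centered : \sum_v q v * z v = 0).

Let moment e := \sum_v q v * z v ^+ e.

Lemma prod_moments_le m (a b c d : 'I_m) :
  \prod_k moment ((k == a) + (k == b) + (k == c) + (k == d))%N <=
  ((a == b) && (c == d))%:R + ((a == c) && (b == d))%:R +
  ((a == d) && (b == c))%:R.
Proof.
have moment_le1 e : `|moment e| <= 1.
  rewrite -q_sum1 /moment; apply: le_trans (ler_norm_sum _ _ _) _.
  apply: ler_sum => v _; rewrite normrM normrX ger0_norm //.
  by rewrite ler_piMr // exprn_ile1.
(* A lone index contributes the factor [moment 1 = 0]. *)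
have [paired|/lone_index[k mult1]] :=
  boolP [|| (a == b) && (c == d), (a == c) && (b == d) | (a == d) && (b == c)].
  apply: le_trans (_ : 1 <= _).
    apply: le_trans (ler_norm _) _; rewrite normr_prod.
    by apply: prodr_ile1 => k _; rewrite normr_ge0 moment_le1.
  have := ler0n R ((a == b) && (c == d)); have := ler0n R ((a == c) && (b == d)).
  have := ler0n R ((a == d) && (b == c)).
  by case/or3P: paired => -> /=; lra.
have moment1 : moment 1 = 0 by rewrite -z_centered; apply: eq_bigr => v _.
by rewrite (bigD1 k) //= mult1 moment1 mul0r !addr_ge0.
Qed.

Lemma centered_sum_moment4_le m :
  \sum_(g : {ffun 'I_m -> V}) (\prod_k q (g k)) * (\sum_k z (g k)) ^+ 4
    <= 3 * m%:R ^+ 2.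
Proof.
have prod_moments a b c d : \sum_(g : {ffun 'I_m -> V})
    (\prod_k q (g k)) * (z (g a) * z (g b) * z (g c) * z (g d)) =
    \prod_k moment ((k == a) + (k == b) + (k == c) + (k == d))%N.
  have prod_expr_eq (F : 'I_m -> R) (a' : 'I_m) : \prod_k F k ^+ (k == a') = F a'.
    rewrite (bigD1 a') //= eqxx expr1 big1 ?mulr1 // => k /negbTE ->.
    by rewrite expr0.
  (* The coordinates of [g] are independent under the product weights. *)
  rewrite /moment bigA_distr_bigA; apply: eq_bigr => g _.
  rewrite big_split /=; congr (_ * _).
  by under eq_bigr do rewrite !exprD; rewrite !big_split /= !prod_expr_eq.
rewrite -sum_pairings.
under eq_bigr do rewrite expr4_sum mulr_sumr.
rewrite exchange_big; apply: ler_sum => a _.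
under eq_bigr do rewrite mulr_sumr.
rewrite exchange_big; apply: ler_sum => b _.
under eq_bigr do rewrite mulr_sumr.
rewrite exchange_big; apply: ler_sum => c _.
under eq_bigr do rewrite mulr_sumr.
rewrite exchange_big; apply: ler_sum => d _.
by rewrite prod_moments prod_moments_le.
Qed.

End FourthMoment.

(** * Strong law of large numbers for finite-valued i.i.d. sequences *)

Lemma measure_bigsetU_seq (R : realType) d (T : measurableType d)
    (mu : {measure set T -> \bar R}) (I : choiceType) (r : seq I) (P : pred I)
    (E : I -> set T) :
  uniq r -> (forall i, measurable (E i)) ->
  (forall i j, i != j -> E i `&` E j = set0) ->
  mu (\big[setU/set0]_(i <- r | P i) E i) = (\sum_(i <- r | P i) mu (E i))%E.
Proof.
move=> + mE disjE; elim: r => [|i r IH] /=; first by rewrite !big_nil measure0.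
case/andP => i_notin_r r_uniq; rewrite !big_cons; case: (P i); last exact: IH.
rewrite measureU //; first by congr (_ + _); exact: IH.
  exact: bigsetU_measurable.
rewrite -bigcup_seq_cond; apply/seteqP; split => t //= [Et [j /andP[jr _] Ejt]].
have ij : i != j by apply: contraNneq i_notin_r => ->.
by have := disjE _ _ ij; rewrite -subset0 => /(_ t); apply.
Qed.

Lemma sum_inv_sq_le (R : realFieldType) N :
  \sum_(0 <= i < N) ((i.+1)%:R ^+ 2)^-1 <= 2 - 2 / (N.+1)%:R :> R.
Proof.
elim: N => [|N IH]; first by rewrite big_nil mulr1n invr1 mulr1 subrr.
rewrite big_nat_recr //=; apply: le_trans (lerD IH (lexx _)) _.
set x : R := (N.+1)%:R.
have x_ge1 : 1 <= x by rewrite /x ler1n.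
have -> : (N.+2)%:R = x + 1 :> R by rewrite /x -natr1.
rewrite -subr_ge0.
have -> : 2 - 2 / (x + 1) - (2 - 2 / x + (x ^+ 2)^-1) =
    (x - 1) / (x ^+ 2 * (x + 1)).
  by field; apply/andP; split; rewrite gt_eqF //; lra.
by rewrite divr_ge0 ?subr_ge0 // mulr_ge0 ?sqr_ge0 //; lra.
Qed.

Section FiniteIIDSequence.
Variables (R : realType) (d : measure_display) (T : measurableType d).
Variables (Pr : probability T R) (V : finType) (Z : nat -> T -> V) (q : V -> R).

Definition sample m t : {ffun 'I_m -> V} := [ffun i : 'I_m => Z i t].

Definition cylinder {m} (g : {ffun 'I_m -> V}) : set T := sample m @^-1` [set g].

Lemma cylinder0 (g : {ffun 'I_0 -> V}) : cylinder g = setT.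
Proof. by apply/seteqP; split => t // _; apply/ffunP => -[]. Qed.

Lemma cylinder_bigcap m (g : {ffun 'I_m.+1 -> V}) :
  cylinder g = \big[setI/setT]_(0 <= k < m.+1) [set t | Z k t = g (inord k)].
Proof.
rewrite -bigcap_seq; apply/seteqP; split => t /=.
  move=> /ffunP sample_g k /=; rewrite mem_index_iota => /andP[_ k_lt].
  by have := sample_g (inord k); rewrite ffunE inordK.
move=> Zg; apply/ffunP => i; rewrite ffunE -[in RHS](inord_val i); apply: Zg.
by rewrite /= mem_index_iota /=.
Qed.

Lemma sample_preimage m (B : pred {ffun 'I_m -> V}) :
  [set t | B (sample m t)] =
  \big[setU/set0]_(g <- enum {ffun 'I_m -> V} | B g) cylinder g.
Proof.
rewrite -bigcup_seq_cond; apply/seteqP; split => t /=.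
  by move=> Bt; exists (sample m t); rewrite /= ?mem_enum ?Bt.
by move=> [g /andP[_ Bg] /= ->].
Qed.

Lemma freq_sample_event (h : R -> bool) v m :
  [set t | h (freq (Z^~ t) v m)] =
  [set t | (fun g => h (m%:R^-1 * \sum_(k < m) (g k == v)%:R)) (sample m t)].
Proof.
by apply/seteqP; split => t; rewrite /= /freq; under eq_bigr do rewrite ffunE.
Qed.

Hypothesis measurable_Z : forall k v, measurable [set t | Z k t = v].

Lemma measurable_cylinder m (g : {ffun 'I_m -> V}) : measurable (cylinder g).
Proof.
case: m g => [|m] g; first by rewrite cylinder0.
by rewrite cylinder_bigcap; apply: bigsetI_measurable => k _.
Qed.

Lemma measurable_sample_event m (B : pred {ffun 'I_m -> V}) :
  measurable [set t | B (sample m t)].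
Proof.
rewrite sample_preimage; apply: bigsetU_measurable => g _.
exact: measurable_cylinder.
Qed.

Lemma measurable_freq_event (h : R -> bool) v m :
  measurable [set t | h (freq (Z^~ t) v m)].
Proof.
rewrite (freq_sample_event h).
exact: (measurable_sample_event _
  (fun g => h (m%:R^-1 * \sum_(k < m) (g k == v)%:R))).
Qed.

Hypothesis Z_iid : forall (s : seq nat) (f : nat -> V), uniq s ->
  Pr (\big[setI/setT]_(k <- s) [set t | Z k t = f k]) =
  (\prod_(k <- s) q (f k))%:E.

Lemma cylinder_prob m (g : {ffun 'I_m -> V}) :
  Pr (cylinder g) = (\prod_i q (g i))%:E.
Proof.
case: m g => [|m] g; first by rewrite cylinder0 probability_setT big_ord0.
rewrite cylinder_bigcap Z_iid ?iota_uniq // big_mkord.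
by congr (_%:E); apply: eq_bigr => i _; rewrite inord_val.
Qed.

Lemma sample_prob m (B : pred {ffun 'I_m -> V}) :
  Pr [set t | B (sample m t)] = (\sum_(g | B g) \prod_i q (g i))%:E.
Proof.
rewrite sample_preimage measure_bigsetU_seq ?enum_uniq //; last 2 first.
- exact: measurable_cylinder.
- move=> g g' /eqP gg'; apply/seteqP; split => t // [].
  by rewrite /cylinder /preimage /set1 /= => -> /gg'.
transitivity (\sum_(g <- enum {ffun 'I_m -> V} | B g) (\prod_i q (g i))%:E)%E.
  by apply: eq_bigr => g _; exact: cylinder_prob.
by rewrite sumEFin big_enum_cond.
Qed.

Hypotheses (q_ge0 : forall v, 0 <= q v) (q_sum1 : \sum_v q v = 1).

Lemma indicator_dev_le1 v w : `|(w == v)%:R - q v| <= 1.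
Proof.
have qv_le1 : q v <= 1 by rewrite -q_sum1 (bigD1 v) //= lerDl sumr_ge0.
by rewrite ler_norml; case: (w == v) => /=; have := q_ge0 v; lra.
Qed.

Lemma indicator_dev_centered v : \sum_w q w * ((w == v)%:R - q v) = 0.
Proof.
under eq_bigr do rewrite mulrBr; rewrite sumrB -mulr_suml q_sum1 mul1r.
rewrite (bigD1 v) //= eqxx mulr1 big1 ?addr0 ?subrr // => w /negbTE ->.
by rewrite mulr0.
Qed.

Lemma freq_dev_prob v {m} {eps : R} : (0 < m)%N -> 0 < eps ->
  (Pr [set t | (eps <= `|freq (Z^~ t) v m - q v|)%R] <=
   (3 / eps ^+ 4 / m%:R ^+ 2)%:E)%E.
Proof.
move=> m_gt0 eps_gt0; have m_pos : 0 < m%:R :> R by rewrite ltr0n.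
pose dev (g : {ffun 'I_m -> V}) := m%:R^-1 * \sum_(k < m) (g k == v)%:R - q v.
pose z w := (w == v)%:R - q v.
have z_sum (g : {ffun 'I_m -> V}) : \sum_(k < m) z (g k) = m%:R * dev g.
  rewrite sumrB sumr_const card_ord mulrBr mulrA mulfV ?gt_eqF //.
  by rewrite mul1r mulr_natl.
(* Markov's inequality for the fourth power of the centred count [m * dev g]. *)
pose c := (m%:R * eps) ^+ 4.
have c_gt0 : 0 < c by rewrite exprn_gt0 // mulr_gt0.
rewrite (freq_sample_event (fun x => eps <= `|x - q v|)).
rewrite (sample_prob _ (fun g => eps <= `|dev g|)) lee_fin.
apply: (@le_trans _ _
  (\sum_(g : {ffun 'I_m -> V}) (\prod_i q (g i)) * ((\sum_k z (g k)) ^+ 4 / c))).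
  rewrite [leRHS](bigID (fun g => eps <= `|dev g|)) /= -[leLHS]addr0.
  apply: lerD; last first.
    apply: sumr_ge0 => g _.
    by rewrite mulr_ge0 ?divr_ge0 ?prodr_ge0 ?exprn_even_ge0 ?(ltW c_gt0).
  apply: ler_sum => g dev_ge; rewrite ler_peMr ?prodr_ge0 // ler_pdivlMr // mul1r.
  rewrite z_sum; have -> : (m%:R * dev g) ^+ 4 = `|m%:R * dev g| ^+ 4.
    by rewrite -normrX ger0_norm // -[4%N]/(2 * 2)%N exprM sqr_ge0.
  rewrite /c; apply: lerXn2r; rewrite ?nnegrE ?normr_ge0 //.
    by rewrite mulr_ge0 ?(ltW m_pos) ?(ltW eps_gt0).
  by rewrite normrM (ger0_norm (ltW m_pos)) ler_pM2l.
under eq_bigr do rewrite mulrA; rewrite -mulr_suml.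
have moment4_le := centered_sum_moment4_le q_ge0 q_sum1
  (indicator_dev_le1 v) (indicator_dev_centered v) m.
apply: le_trans (ler_wpM2r _ moment4_le) _; first by rewrite invr_ge0 ltW.
suff -> : 3 * m%:R ^+ 2 / c = 3 / eps ^+ 4 / m%:R ^+ 2 by [].
by rewrite /c; field; rewrite !gt_eqF.
Qed.

Lemma freq_eventually_close v (eps : R) : 0 < eps ->
  {ae Pr, forall t, exists N, forall m, (N <= m)%N ->
    `|freq (Z^~ t) v m - q v| < eps}.
Proof.
move=> eps_gt0.
pose F k := [set t | (eps <= `|freq (Z^~ t) v k.+1 - q v|)%R].
have mF k : measurable (F k).
  exact: measurable_freq_event (fun x => eps <= `|x - q v|) v k.+1.
(* Borel-Cantelli: by [freq_dev_prob], [Pr (F k) = O(1/k^2)]. *)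
have sumF : (\sum_(k <oo) Pr (F k) < +oo)%E.
  apply: (@le_lt_trans _ _ (2 * (3 / eps ^+ 4))%:E); last exact: ltry.
  apply: lime_le; first by apply: is_cvg_nneseries => k _ _; exact: measure_ge0.
  apply: nearW => N.
  apply: (@le_trans _ _ (\sum_(0 <= k < N) (3 / eps ^+ 4 / (k.+1)%:R ^+ 2)%:E)%E).
    by apply: lee_sum => k _; apply: (freq_dev_prob v (ltn0Sn k) eps_gt0).
  rewrite sumEFin lee_fin -mulr_sumr [leRHS]mulrC ler_wpM2l //.
    by rewrite divr_ge0 ?exprn_ge0 ?(ltW eps_gt0).
  by apply: le_trans (sum_inv_sq_le R N) _; rewrite lerBlDr lerDl.
exists (lim_sup_set F); split.
- by apply: bigcap_measurable => // k _; exact: bigcup_measurable.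
- exact: lim_sup_set_cvg0.
move=> t /= not_close N _; apply: contrapT => never_far; apply: not_close.
exists N.+1 => -[//|k] /ltnSE Nk; rewrite ltNge; apply/negP => Fk.
by apply: never_far; exists k.
Qed.

Theorem freq_cvg_ae :
  {ae Pr, forall t, forall v, freq (Z^~ t) v m @[m --> \oo] --> q v}.
Proof.
have close : {ae Pr, forall t, forall (r : nat) v, exists N, forall m,
    (N <= m)%N -> `|freq (Z^~ t) v m - q v| < r.+1%:R^-1}.
  apply: ae_foralln => r; apply: filter_forall => v.
  exact: freq_eventually_close.
apply: filterS close => t close v; apply/cvgrPdist_lt => e e_gt0.
have [r r_lt_e] : exists r : nat, r.+1%:R^-1 < e.
  exists (Num.truncn e^-1); have := truncnS_gt e^-1.
  by rewrite -ltf_pV2 ?posrE ?invr_gt0 ?ltr0n // invrK.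
have [N closeN] := close r v; exists N => // m /= Nm.
by rewrite distrC; apply: lt_trans (closeN m Nm) r_lt_e.
Qed.

End FiniteIIDSequence.

Arguments freq_cvg_ae {R d T Pr V Z q}.

Definition pair_law {R : realType} {n : nat} (A : 'M[R]_n) (i j : 'I_n) : R :=
  n%:R^-1 * transP A i j.

Section RandomWalk.
Context {R : realType} {n : nat} {A : 'M[R]_n}.

Lemma fbQ_entry : (forall j, nu A j != 0) ->
  forall i j, fbQ A i j = \sum_l transP A i l * (nu A l)^-1 * transP A j l.
Proof.
move=> nu_neq0 i j; rewrite /fbQ invmx_diag_mx => [|k]; last by rewrite mxE.
by rewrite !mxE; apply: eq_bigr => l _; rewrite mul_mx_diag !mxE.
Qed.

Lemma pair_law_colsum j : \sum_i pair_law A i j = n%:R^-1 * nu A j.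
Proof. by rewrite -mulr_sumr. Qed.

Hypothesis outdeg_neq0 : forall i, outdeg A i != 0.

Lemma transP_entry i j : transP A i j = (outdeg A i)^-1 * A i j.
Proof.
rewrite /transP invmx_diag_mx => [|k]; last by rewrite mxE.
by rewrite mul_diag_mx !mxE.
Qed.

Lemma transP_rowsum i : \sum_j transP A i j = 1.
Proof. by under eq_bigr do rewrite transP_entry; rewrite -mulr_sumr mulVf. Qed.

Lemma pair_law_ge0 : (forall i j, 0 <= A i j) -> forall i j, 0 <= pair_law A i j.
Proof.
move=> A_ge0 i j; rewrite mulr_ge0 ?invr_ge0 // transP_entry mulr_ge0 //.
by rewrite invr_ge0 sumr_ge0.
Qed.

Lemma pair_law_rowsum i : \sum_j pair_law A i j = n%:R^-1.
Proof. by rewrite -mulr_sumr transP_rowsum mulr1. Qed.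

Lemma pair_law_sum1 : (0 < n)%N -> \sum_(v : 'I_n * 'I_n) pair_law A v.1 v.2 = 1.
Proof.
move=> n_gt0; rewrite -(pair_bigA _ (pair_law A)) /=.
under eq_bigr do rewrite pair_law_rowsum.
by rewrite sumr_const card_ord -(mulr_natr n%:R^-1) mulVf // pnatr_eq0 -lt0n.
Qed.

End RandomWalk.

Section WalkPairs.
Context {R : realType} {d : measure_display} {T : measurableType d}.
Context {Pr : probability T R} {n : nat} {X Y : nat -> T -> 'I_n}.

Lemma pair_eventE k v : pair_event X Y k v = [set t | (X k t, Y k t) = v].
Proof.
by case: v => i j; apply/seteqP; split => t; rewrite /pair_event /= => -[-> ->].
Qed.

Lemma measurable_walk_pair : sample_measurable X Y ->
  forall k v, measurable [set t | (X k t, Y k t) = v].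
Proof.
move=> Hmeas k [i j]; rewrite -pair_eventE.
by have [mX mY] := Hmeas k i j; exact: measurableI.
Qed.

Lemma walk_pairs_iid {Pm : 'M[R]_n} :
  indep_pairs Pr X Y -> walk_pair_law Pr Pm X Y ->
  forall (s : seq nat) (f : nat -> 'I_n * 'I_n), uniq s ->
  Pr (\big[setI/setT]_(k <- s) [set t | (X k t, Y k t) = f k]) =
  (\prod_(k <- s) (n%:R^-1 * Pm (f k).1 (f k).2))%:E.
Proof.
move=> Hindep Hlaw s f s_uniq.
under eq_bigr do rewrite -pair_eventE.
rewrite Hindep // -prodEFin; apply: eq_bigr => k _.
by case: (f k) => i j; have [-> ->] := Hlaw k i j.
Qed.

End WalkPairs.

Theorem mainTheorem2 (R : realType) (n : nat) (A : 'M[R]_n)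
  (A_ge0 : forall i j, 0 <= A i j)
  (o_gt0 : forall i, 0 < outdeg A i)
  (nu_gt0 : forall j, 0 < nu A j)
  (d : measure_display) (T : measurableType d) (Pr : probability T R)
  (X Y : nat -> T -> 'I_n)
  (Hmeas : sample_measurable X Y)
  (Hindep : indep_pairs Pr X Y)
  (Hlaw : walk_pair_law Pr (transP A) X Y) :
  {ae Pr, forall t,
    [/\ mx_cvg (fun m => Khat R m (X^~ t) (Y^~ t)) (transP A),
        mx_cvg (fun m => Phat R m (X^~ t) (Y^~ t)) (transP A)^T &
        mx_cvg (fun m => Fhat R m (X^~ t) (Y^~ t)) (fbQ A)]}.
Proof.
have [n0|n_gt0] := posnP n; first by subst n; apply: aeW => t; split => -[].
have o_neq0 i : outdeg A i != 0 by rewrite gt_eqF.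
have nu_neq0 j : nu A j != 0 by rewrite gt_eqF.
have nV_neq0 : n%:R^-1 != 0 :> R by rewrite invr_neq0 // pnatr_eq0 -lt0n.
have := freq_cvg_ae (measurable_walk_pair Hmeas) (walk_pairs_iid Hindep Hlaw)
  (fun v => pair_law_ge0 o_neq0 A_ge0 v.1 v.2) (pair_law_sum1 o_neq0 n_gt0).
apply: filterS => t freq_cvg.
have pair_freq_cvg i j : freq (fun k => (X k t, Y k t)) (i, j) m @[m --> \oo] -->
    pair_law A i j := freq_cvg (i, j).
have rowsum_neq0 i : \sum_j pair_law A i j != 0 by rewrite pair_law_rowsum.
have colsum_neq0 j : \sum_i pair_law A i j != 0.
  by rewrite pair_law_colsum mulf_neq0.
split => i j.
- have := Khat_cvg pair_freq_cvg rowsum_neq0 i j.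
  by rewrite (pair_law_rowsum o_neq0) /pair_law mulKf.
- have := Phat_cvg pair_freq_cvg rowsum_neq0 i j.
  by rewrite (pair_law_rowsum o_neq0) /pair_law mulKf // [(transP A)^T i j]mxE.
- have := Fhat_cvg pair_freq_cvg rowsum_neq0 colsum_neq0 i j.
  rewrite fbQ_entry //; congr (_ --> _); apply: eq_bigr => l _.
  rewrite (pair_law_rowsum o_neq0) pair_law_colsum /pair_law.
  by field; rewrite nu_neq0 -invr_eq0.
Qed.
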